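(* Let $d\ge 1$ and consider the filtered ring $\mathbf{Z}[x]/(x^3)$ with $x$ in filtration exactly $d$. Let $R$ be a filtered $\lambda$-ring structure on it. Then $R$ is isomorphic to one of the following filtered $\lambda$-rings: (1) $S((c_p))$, the filtered $\lambda$-ring structure with Adams operations $\psi^p(x)=c_px^2$ for all primes $p$, where $c_2\equiv 1\pmod 2$ and $c_p\equiv 0\pmod p$ for $p>2$. Moreover, every such sequence $(c_p)$ gives a filtered $\lambda$-ring structure on $\mathbf{Z}[x]/(x^3)$, and $S((c_p))\cong S((c'_p))$ if and only if $(c_p)=\pm(c'_p)$. (2) $S((b_p),k)$, the filtered $\lambda$-ring structure with Adams operations $\psi^p(x)=b_px+c_px^2$ for all primes $p$, where $(b_p)$ satisfies condition (A) and the $c_p$ are of the following form: letting $p_1,\ldots,p_m$ be the list of all odd primes satisfying condition (B) for $(b_p)$, and $G=\gcd(b_p(b_p-1)\colon p \text{ prime})$, there is an odd integer $k$ with $1\le k\le G/2$, $k\equiv 0\pmod{p_1\cdots p_m}$ (an empty condition if there are no such primes), and $c_p=kb_p(b_p-1)/G$ for all primes $p$. Moreover, every such pair $((b_p),k)$ gives a filtered $\lambda$-ring structure on $\mathbf{Z}[x]/(x^3)$, and $S((b_p),k)\cong S((b'_p),k')$ if and only if $b_p=b'_p$ for all primes $p$ and $k=k'$. Finally, no $S((c_p))$ is isomorphic to any $S((b_p),k)$.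
   Context: A (special) $\lambda$-ring is a commutative ring with operations $\lambda^i$ satisfying the Atiyah–Tall axioms; a filtered $\lambda$-ring is a $\lambda$-ring with a decreasing filtration by ideals $R=I^0\supseteq I^1\supseteq\cdots$ each closed under $\lambda^i$, $i\ge1$; morphisms are filtration-preserving $\lambda$-ring maps. Every $\lambda$-ring has Adams operations $\psi^k$ (ring endomorphisms defined by the Newton formula). The filtered ring $\mathbf{Z}[x]/(x^n)$ with $x$ in filtration exactly $d$ has $I^k$ equal to the ideal generated by the $x^j$ with $jd\ge k$. A filtered $\lambda$-ring structure on it is determined by the polynomials $\psi^p(x)$ ($p$ prime), which have zero constant term; conversely a family of polynomials without constant term defines (the Adams operations of) a filtered $\lambda$-ring structure iff $\psi^p(\psi^q(x))=\psi^q(\psi^p(x))$ and $\psi^p(x)\equiv x^p \pmod p$ for all primes $p,q$. For a prime $p$ and integer $m$, $\theta_p(m)$ is the largest integer with $p^{\theta_p(m)}\mid m$, and $\theta_p(0)=-\infty$. A sequence of integers $(b_p)$ indexed by the primes satisfies condition (A) if $b_2\ne0$, $b_p\equiv0\pmod p$ for all primes $p$, and $b_p(b_p-1)\equiv0\pmod{2^{\theta_2(b_2)}}$ for all odd primes $p$. Given such $(b_p)$, an odd prime $p$ satisfies condition (B) if $b_p\ne0$ and $\theta_p(b_p)=\min\{\theta_p(b_q(b_q-1))\colon q \text{ prime}, b_q\ne0\}$. *)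

From mathcomp Require Import all_boot all_order all_algebra.
Set Implicit Arguments. Unset Strict Implicit. Unset Printing Implicit Defensive.
Import Order.TTheory GRing.Theory Num.Theory.
Local Open Scope ring_scope.

(* Elements of Z[x]/(x^3) are represented by their canonical representatives:
   integer polynomials of size <= 3 (degree <= 2).  [trunc3] is reduction
   modulo x^3. *)
Definition trunc3 (f : {poly int}) : {poly int} := take_poly 3 f.

(* The filtration of Z[x]/(x^3) with x in filtration exactly d:
   I^k = ideal generated by the x^j with j*d >= k.  A reduced element
   a0 + a1 x + a2 x^2 lies in I^k iff a_j = 0 whenever j*d < k. *)
Definition in_filt (d k : nat) (f : {poly int}) : Prop :=
  forall j : nat, (j * d < k)%N -> f`_j = 0.

(* A family psi : nat -> {poly int}, where psi p represents psi^p(x) for p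
   prime (values at non-primes are irrelevant), gives (the Adams operations
   of) a filtered lambda-ring structure on Z[x]/(x^3) iff each psi^p(x) is an
   element without constant term, psi^p(psi^q(x)) = psi^q(psi^p(x)), and
   psi^p(x) = x^p mod p. Here psi^p(psi^q(x)) = (psi q)(psi p (x)) since
   psi^p is a ring endomorphism. *)
Definition is_filt_lambda (psi : nat -> {poly int}) : Prop :=
  (forall p, prime p -> (size (psi p) <= 3)%N /\ (psi p)`_0 = 0) /\
  (forall p q, prime p -> prime q ->
     trunc3 ((psi q) \Po (psi p)) = trunc3 ((psi p) \Po (psi q))) /\
  (forall p, prime p -> forall i, (i < 3)%N ->
     (p%:Z %| (psi p - 'X^p)`_i)%Z).

(* The ring endomorphism of Z[x]/(x^3) sending x to g is f |-> trunc3 (f \Po g).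
   It preserves the filtration iff it maps each I^k into I^k. *)
Definition filt_preserving (d : nat) (g : {poly int}) : Prop :=
  forall (k : nat) (f : {poly int}), (size f <= 3)%N -> in_filt d k f ->
    in_filt d k (trunc3 (f \Po g)).

(* Isomorphism of filtered lambda-ring structures psi1 -> psi2 on Z[x]/(x^3):
   a ring automorphism phi (x |-> g) with inverse (x |-> h), both filtration
   preserving, commuting with the Adams operations:
   phi(psi1^p(x)) = psi2^p(phi(x)). *)
Definition flr_iso (d : nat) (psi1 psi2 : nat -> {poly int}) : Prop :=
  exists g h : {poly int},
    (size g <= 3)%N /\ (size h <= 3)%N /\
    trunc3 (g \Po h) = 'X /\ trunc3 (h \Po g) = 'X /\
    filt_preserving d g /\ filt_preserving d h /\
    (forall p, prime p -> trunc3 ((psi1 p) \Po g) = trunc3 (g \Po (psi2 p))).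

Definition theta (p : nat) (m : int) : nat := logn p `|m|%N.

Definition condC (c : nat -> int) : Prop :=
  ~~ (2%:Z %| c 2%N)%Z /\ (forall p, prime p -> (2 < p)%N -> (p%:Z %| c p)%Z).

Definition condA (b : nat -> int) : Prop :=
  [/\ b 2 != 0,
      (forall p, prime p -> (p%:Z %| b p)%Z) &
      (forall p, prime p -> odd p ->
         ((2 ^ theta 2%N (b 2%N))%:Z %| b p * (b p - 1))%Z)].

Definition condB (b : nat -> int) (p : nat) : Prop :=
  b p != 0 /\
  (forall q, prime q -> b q != 0 -> (theta p (b p) <= theta p (b q * (b q - 1)))%N) /\
  (exists q, [/\ prime q, b q != 0 & theta p (b p) = theta p (b q * (b q - 1))]).

Definition is_gcd_all (b : nat -> int) (G : int) : Prop :=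
  [/\ 0 <= G,
      (forall p, prime p -> (G %| b p * (b p - 1))%Z) &
      (forall e : int, (forall p, prime p -> (e %| b p * (b p - 1))%Z) -> (e %| G)%Z)].

(* Conditions on k: odd, 1 <= k <= G/2, divisible by the product p_1...p_m of
   all odd primes satisfying (B) (equivalently: by each of them). *)
Definition condK (b : nat -> int) (G k : int) : Prop :=
  [/\ ~~ (2%:Z %| k)%Z, 1 <= k, 2 * k <= G &
      (forall p, prime p -> odd p -> condB b p -> (p%:Z %| k)%Z)].

Definition S_c (c : nat -> int) : nat -> {poly int} :=
  fun p => (c p)%:P * 'X^2.

Definition S_bk (b : nat -> int) (k G : int) : nat -> {poly int} :=
  fun p => (b p)%:P * 'X + (divz (k * (b p * (b p - 1))) G)%:P * 'X^2.

From mathcomp Require Import all_boot all_order all_algebra.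
From mathcomp Require Import zify ring.
From Stdlib Require Import ClassicalEpsilon.
Set Implicit Arguments. Unset Strict Implicit. Unset Printing Implicit Defensive.
Import Order.TTheory GRing.Theory Num.Theory.
Local Open Scope ring_scope.

(* Write psi^p(x) = b_p x + c_p x^2.  Commutation of psi^p and psi^q is the single
   relation c_p b_q (b_q - 1) = c_q b_p (b_p - 1), and psi^p(x) = x^p mod p fixes
   b_p and c_p mod p.  The filtered automorphisms are x |-> u x + v x^2 with u = +-1;
   they keep every b_p and replace c_p by u c_p + v b_p (b_p - 1).  If b_2 = 0 then all
   b_p vanish and only the sign of (c_p) can change.  Otherwise c_p = t b_p (b_p - 1) / G
   for one odd t, which the automorphisms move to +-t + v G, hence to a unique odd k in
   [1, G/2].  An odd prime p satisfies (B) exactly when p does not divide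
   b_p (b_p - 1) / G, and then p | c_p forces p | t, hence p | k. *)

Lemma poly_size3E (R : nzSemiRingType) (f : {poly R}) : (size f <= 3)%N ->
  f = (f`_0)%:P + f`_1 *: 'X + f`_2 *: 'X^2.
Proof.
move=> f3; apply/polyP => i.
rewrite !coefD !coefZ coefC coefX coefXn.
case: i => [|[|[|i]]]; rewrite /= ?mulr0 ?mulr1 ?addr0 ?add0r //.
by rewrite nth_default // (leq_trans f3).
Qed.

Lemma poly_size3_eq (R : nzSemiRingType) (f g : {poly R}) :
  (size f <= 3)%N -> (size g <= 3)%N ->
  f`_0 = g`_0 -> f`_1 = g`_1 -> f`_2 = g`_2 -> f = g.
Proof.
by move=> f3 g3 e0 e1 e2; rewrite (poly_size3E f3) (poly_size3E g3) e0 e1 e2.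
Qed.

Lemma coef_comp_poly_size3 (R : comNzRingType) (f g : {poly R}) :
  (size f <= 3)%N -> g`_0 = 0 ->
  [/\ (f \Po g)`_0 = f`_0, (f \Po g)`_1 = f`_1 * g`_1 &
      (f \Po g)`_2 = f`_1 * g`_2 + f`_2 * g`_1 ^+ 2].
Proof.
move=> f3 g0.
have -> : f \Po g = (f`_0)%:P + f`_1 *: g + f`_2 *: g ^+ 2.
  by rewrite {1}(poly_size3E f3) !comp_polyD !comp_polyZ comp_polyC comp_polyX comp_Xn_poly.
rewrite !coefD !coefZ !coefC expr2 !coefM !big_ord_recr !big_ord0 /= g0.
by split; ring.
Qed.

Lemma size_trunc3 (f : {poly int}) : (size (trunc3 f) <= 3)%N.
Proof. exact: size_take_poly. Qed.

Lemma coef_trunc3 (f : {poly int}) i : (i < 3)%N -> (trunc3 f)`_i = f`_i.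
Proof. by move=> i3; rewrite coef_take_poly i3. Qed.

Lemma coef_trunc3_comp (f g : {poly int}) : (size f <= 3)%N -> g`_0 = 0 ->
  [/\ (trunc3 (f \Po g))`_0 = f`_0, (trunc3 (f \Po g))`_1 = f`_1 * g`_1 &
      (trunc3 (f \Po g))`_2 = f`_1 * g`_2 + f`_2 * g`_1 ^+ 2].
Proof. by move=> f3 g0; rewrite !coef_trunc3 //; apply: coef_comp_poly_size3. Qed.

Lemma filt_preservingP d (g : {poly int}) : (0 < d)%N -> (size g <= 3)%N ->
  filt_preserving d g <-> g`_0 = 0.
Proof.
move=> d_gt0 g3; split=> [gP | g0 k f f3 fk j jk].
  have Xk : in_filt d 1 'X by case=> [|j]; rewrite coefX //= mulSn; lia.
  have X3 : (size ('X : {poly int}) <= 3)%N by rewrite size_polyX.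
  have := gP 1%N 'X X3 Xk 0%N isT.
  by rewrite comp_polyX coef_trunc3.
have [e0 e1 e2] := coef_trunc3_comp f3 g0.
case: j jk => [|[|[|j]]] jk.
- by rewrite e0 fk.
- by rewrite e1 fk ?mul0r.
- by rewrite e2 !fk ?mul0r ?addr0 //; lia.
- by rewrite coef_take_poly.
Qed.

Lemma mulz_eq1 (a b : int) : a * b = 1 -> a = 1 \/ a = -1.
Proof.
move=> ab1; have : a \is a GRing.unit by apply/unitrP; exists b; rewrite mulrC ab1.
lia.
Qed.

(* The coefficients of x and x^2 in psi1^p(g(x)) = g(psi2^p(x)) for g = u x + v x^2. *)
Lemma conj_coef_eqs (u v b1 b2 c1 c2 : int) : u = 1 \/ u = -1 ->
  (b1 * u = u * b2 /\ b1 * v + c1 * u ^+ 2 = u * c2 + v * b2 ^+ 2) <->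
  (b1 = b2 /\ c1 = u * c2 + v * (b1 * (b1 - 1))).
Proof.
rewrite !expr2; case=> ->; split=> -[b12 c12]; have {}b12 : b1 = b2 by lia.
all: by subst b2; split; lia.
Qed.

Definition adams_shaped (psi : nat -> {poly int}) : Prop :=
  forall p, prime p -> (size (psi p) <= 3)%N /\ (psi p)`_0 = 0.

Lemma flr_isoP d psi1 psi2 : (0 < d)%N -> adams_shaped psi1 -> adams_shaped psi2 ->
  flr_iso d psi1 psi2 <->
  exists u v : int, (u = 1 \/ u = -1) /\ forall p, prime p ->
    (psi1 p)`_1 = (psi2 p)`_1 /\
    (psi1 p)`_2 = u * (psi2 p)`_2 + v * ((psi1 p)`_1 * ((psi1 p)`_1 - 1)).
Proof.
move=> d_gt0 psi1P psi2P; split.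
  move=> [g [h [g3 [h3 [ghX [_ [gP [hP psiC]]]]]]]].
  move/(filt_preservingP d_gt0 g3): gP => g0; move/(filt_preservingP d_gt0 h3): hP => h0.
  have [_ gh1 _] := coef_trunc3_comp g3 h0.
  rewrite ghX coefX /= in gh1.
  have u_sign := mulz_eq1 (esym gh1).
  exists g`_1, g`_2; split=> // p p_pr.
  have [s1 z1] := psi1P p p_pr; have [s2 z2] := psi2P p p_pr.
  have [_ l1 l2] := coef_trunc3_comp s1 g0; have [_ r1 r2] := coef_trunc3_comp g3 z2.
  by apply/conj_coef_eqs => //; rewrite -l1 -l2 -r1 -r2 psiC.
move=> [u [v [u_sign psiE]]].
(* [x |-> u x - u v x^2] inverts [x |-> u x + v x^2] because u^2 = 1. *)
pose g : {poly int} := Poly [:: 0; u; v].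
pose h : {poly int} := Poly [:: 0; u; - (u * v)].
have [g3 h3] : (size g <= 3 /\ size h <= 3)%N by split; apply: size_Poly.
have [g0 h0] : g`_0 = 0 /\ h`_0 = 0 by rewrite !coef_Poly.
have X3 : (size ('X : {poly int}) <= 3)%N by rewrite size_polyX.
have u2 : u * u = 1 by case: u_sign => ->.
exists g, h; do 2 (split; first by []).
split; [|split].
- have [e0 e1 e2] := coef_trunc3_comp g3 h0.
  apply: poly_size3_eq; rewrite ?size_trunc3 ?e0 ?e1 ?e2 ?coefX ?coef_Poly //=.
  rewrite expr2; nia.
- have [e0 e1 e2] := coef_trunc3_comp h3 g0.
  apply: poly_size3_eq; rewrite ?size_trunc3 ?e0 ?e1 ?e2 ?coefX ?coef_Poly //=.
  rewrite expr2; nia.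
do 2 (split; first exact/filt_preservingP).
move=> p p_pr; have [s1 z1] := psi1P p p_pr; have [s2 z2] := psi2P p p_pr.
have [l0 l1 l2] := coef_trunc3_comp s1 g0; have [r0 r1 r2] := coef_trunc3_comp g3 z2.
have [E1 E2] := (conj_coef_eqs v _ _ _ _ u_sign).2 (psiE p p_pr).
apply: poly_size3_eq; rewrite ?size_trunc3 ?l0 ?l1 ?l2 ?r0 ?r1 ?r2 ?coef_Poly //.
Qed.

Lemma trunc3_comp_commE (f g : {poly int}) : (size f <= 3)%N -> (size g <= 3)%N ->
  f`_0 = 0 -> g`_0 = 0 ->
  trunc3 (f \Po g) = trunc3 (g \Po f) <->
  g`_2 * (f`_1 * (f`_1 - 1)) = f`_2 * (g`_1 * (g`_1 - 1)).
Proof.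
move=> f3 g3 f0 g0.
have [l0 l1 l2] := coef_trunc3_comp f3 g0; have [r0 r1 r2] := coef_trunc3_comp g3 f0.
have -> : trunc3 (f \Po g) = trunc3 (g \Po f) <->
   f`_1 * g`_2 + f`_2 * g`_1 ^+ 2 = g`_1 * f`_2 + g`_2 * f`_1 ^+ 2.
  rewrite -l2 -r2; split=> [-> // | E].
  by apply: poly_size3_eq; rewrite ?size_trunc3 ?l0 ?l1 ?r0 ?r1 ?f0 ?g0 1?mulrC.
rewrite !expr2; move: (f`_1) (f`_2) (g`_1) (g`_2) => a b c e.
split; lia.
Qed.

Lemma is_filt_lambdaP psi : is_filt_lambda psi <->
  [/\ adams_shaped psi,
      (forall p q, prime p -> prime q ->
         (psi p)`_2 * ((psi q)`_1 * ((psi q)`_1 - 1)) =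
         (psi q)`_2 * ((psi p)`_1 * ((psi p)`_1 - 1))),
      (2%:Z %| (psi 2%N)`_1)%Z, ~~ (2%:Z %| (psi 2%N)`_2)%Z &
      (forall p, prime p -> odd p -> (p%:Z %| (psi p)`_1)%Z /\ (p%:Z %| (psi p)`_2)%Z)].
Proof.
have commE p q : adams_shaped psi -> prime p -> prime q ->
    trunc3 (psi q \Po psi p) = trunc3 (psi p \Po psi q) <->
    (psi p)`_2 * ((psi q)`_1 * ((psi q)`_1 - 1)) =
    (psi q)`_2 * ((psi p)`_1 * ((psi p)`_1 - 1)).
  move=> shaped p_pr q_pr; have [sp zp] := shaped p p_pr; have [sq zq] := shaped q q_pr.
  exact: trunc3_comp_commE.
have odd_neq p i : prime p -> odd p -> (i < 3)%N -> (i == p) = false.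
  by move=> p_pr p_odd i3; apply/eqP=> ip; subst i; case: p p_pr p_odd i3 => [|[|[|]]].
have c2_odd (c : int) : (2%:Z %| c - 1)%Z = ~~ (2%:Z %| c)%Z.
  by apply/idP/idP; lia.
split=> [[shaped [comm cong]] | [shaped comm b2 c2 bc_odd]].
  split=> [// | p q p_pr q_pr | | | p p_pr p_odd].
  - exact: (commE _ _ shaped p_pr q_pr).1 (comm p q p_pr q_pr).
  - by have := cong 2%N isT 1%N isT; rewrite coefB coefXn subr0.
  - by have := cong 2%N isT 2%N isT; rewrite coefB coefXn c2_odd.
  - have := cong p p_pr 1%N isT; have := cong p p_pr 2%N isT.
    by rewrite !coefB !coefXn !odd_neq // !subr0 => -> ->.
split=> //; split=> [p q p_pr q_pr | p p_pr i i3].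
  exact: (commE _ _ shaped p_pr q_pr).2 (comm p q p_pr q_pr).
have [_ psi0] := shaped p p_pr; rewrite coefB coefXn.
case: (even_prime p_pr) => [p2 | p_odd].
  by subst p; case: i i3 => [|[|[|]]] //= _; rewrite ?psi0 ?subr0 ?c2_odd.
rewrite odd_neq // subr0; have [bp cp] := bc_odd p p_pr p_odd.
by case: i i3 => [|[|[|]]] //= _; rewrite psi0.
Qed.

Section Valuation.
Variable p : nat.
Hypothesis p_pr : prime p.

Lemma dvdz_pexp_theta m (x : int) : x != 0 ->
  ((p ^ m)%N%:Z %| x)%Z = (m <= theta p x)%N.
Proof. by move=> x0; rewrite dvdzE absz_nat pfactor_dvdn // absz_gt0. Qed.

Lemma thetaM (x y : int) : x != 0 -> y != 0 -> theta p (x * y) = (theta p x + theta p y)%N.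
Proof. by move=> x0 y0; rewrite /theta abszM lognM // absz_gt0. Qed.

Lemma theta_gt0 (x : int) : x != 0 -> (0 < theta p x)%N = (p%:Z %| x)%Z.
Proof. by move=> x0; rewrite -dvdz_pexp_theta // expn1. Qed.

Lemma Euclid_dvdzM (x y : int) : (p%:Z %| x * y)%Z = (p%:Z %| x)%Z || (p%:Z %| y)%Z.
Proof. by rewrite !dvdzE abszM absz_nat Euclid_dvdM. Qed.

Lemma coprimez_pexp m (y : int) : ~~ (p%:Z %| y)%Z -> coprimez (p ^ m)%N y.
Proof.
by move=> p_ndvd; rewrite coprimezE absz_nat coprimeXl // prime_coprime.
Qed.

Lemma prime_ndvd_subr1 (x : int) : (p%:Z %| x)%Z -> ~~ (p%:Z %| x - 1)%Z.
Proof.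
move=> px; apply/negP=> px1; have := rpredB px px1.
by rewrite opprB addrC subrK dvdzE absz_nat dvdn1 => /eqP p1; move: p_pr; rewrite p1.
Qed.

Lemma mulrB1_neq0 (x : int) : (p%:Z %| x)%Z -> x != 0 -> x * (x - 1) != 0.
Proof.
move=> px x0; rewrite mulf_neq0 // subr_eq0; apply: contraTneq px => ->.
by rewrite dvdzE absz_nat dvdn1 neq_ltn prime_gt1 ?orbT.
Qed.

Lemma theta_mulB1 (x : int) : (p%:Z %| x)%Z -> theta p (x * (x - 1)) = theta p x.
Proof.
move=> px; have [-> | x0] := eqVneq x 0; first by rewrite mul0r.
have := mulrB1_neq0 px x0; rewrite mulf_eq0 negb_or => /andP[_ x1].
rewrite thetaM //; suff -> : theta p (x - 1) = 0%N by rewrite addn0.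
by apply/eqP; rewrite -leqn0 leqNgt theta_gt0 // prime_ndvd_subr1.
Qed.

End Valuation.

Lemma dvdz2_mulB1 (x : int) : (2%:Z %| x * (x - 1))%Z.
Proof.
have [x2 | x2] := boolP (2%:Z %| x)%Z; first exact: dvdz_mulr.
by apply: dvdz_mull; move: x2; lia.
Qed.

Lemma dvdz_div_gcd (m n k : int) : m != 0 -> (m %| n * k)%Z -> ((m %/ gcdz m n)%Z %| k)%Z.
Proof.
move=> m0 mnk; have g0 : gcdz m n != 0 by rewrite gcdz_eq0 negb_and m0.
rewrite -(dvdz_mul2r g0) divzK ?dvdz_gcdl //.
have : (m %| gcdz (m * k) (n * k))%Z by rewrite dvdz_gcd dvdz_mulr.
by rewrite -mulz_gcdl !dvdzE !abszM absz_nat mulnC.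
Qed.

Lemma gcd_all_exists (b : nat -> int) : b 2%N * (b 2%N - 1) != 0 -> exists G, is_gcd_all b G.
Proof.
move=> a2_neq0.
(* The largest common divisor is the gcd: for any common divisor e, lcm(e, G0) is common too. *)
pose common (e : nat) : bool :=
  if excluded_middle_informative
       (forall p, prime p -> (e%:Z %| b p * (b p - 1))%Z) then true else false.
have commonP e : reflect (forall p, prime p -> (e%:Z %| b p * (b p - 1))%Z) (common e).
  by rewrite /common; case: excluded_middle_informative => h; constructor.
have common1 : common 1 by apply/commonP => p _; apply: dvd1z.
have common_le e : common e -> (e <= `|(b 2%N * (b 2%N - 1))%R|)%N.
  by move/commonP/(_ 2%N isT); rewrite dvdzE absz_nat; apply: dvdn_leq; rewrite absz_gt0.
have [G0 /commonP G0_common G0_max] := ex_maxnP (ex_intro _ 1%N common1) common_le.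
exists G0; split=> // e e_common.
have e_gt0 : (0 < `|e|)%N.
  rewrite absz_gt0; apply: contraNneq a2_neq0 => e0.
  by move: (e_common 2%N isT); rewrite e0 dvd0z.
have lcm_common : common (lcmn `|e| G0).
  apply/commonP => p p_pr; rewrite dvdzE absz_nat dvdn_lcm -dvdzE e_common //=.
  by rewrite -(absz_nat G0) -dvdzE G0_common.
have G0_gt0 : (0 < G0)%N by apply: G0_max.
have -> : G0 = lcmn `|e| G0.
  by apply/eqP; rewrite eqn_leq G0_max // dvdn_leq ?lcmn_gt0 ?e_gt0 ?dvdn_lcmr.
by rewrite dvdzE absz_nat dvdn_lcml.
Qed.

Lemma gcd_all_unique (b b' : nat -> int) G G' : is_gcd_all b G -> is_gcd_all b' G' ->
  (forall p, prime p -> b p = b' p) -> G = G'.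
Proof.
move=> [G_ge0 G_dvd G_max] [G'_ge0 G'_dvd G'_max] bb'.
have GG' : (G %| G')%Z by apply: G'_max => p p_pr; rewrite -bb' ?G_dvd.
have G'G : (G' %| G)%Z by apply: G_max => p p_pr; rewrite bb' ?G'_dvd.
move: GG' G'G; rewrite !dvdzE => GG' G'G.
have : `|G|%N = `|G'|%N by apply/eqP; rewrite eqn_dvd GG' G'G.
lia.
Qed.

Section GcdFamily.
Variables (b : nat -> int) (G : int).
Hypothesis bG : is_gcd_all b G.
Local Notation a p := (b p * (b p - 1)).

Lemma dvdz_gcd_allP e : (e %| G)%Z <-> forall p, prime p -> (e %| a p)%Z.
Proof.
case: bG => _ G_dvd G_max; split=> [eG p p_pr | ]; last exact: G_max.
exact: dvdz_trans eG (G_dvd p p_pr).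
Qed.

Lemma gcd_all_divzK p : prime p -> (a p %/ G)%Z * G = a p.
Proof. by case: bG => _ G_dvd _ p_pr; rewrite divzK ?G_dvd. Qed.

Lemma gcd_all_gt0 : a 2%N != 0 -> 0 < G.
Proof.
case: bG => G_ge0 _ _ a2_neq0; rewrite lt_def G_ge0 andbT.
by apply: contraNneq a2_neq0 => G0; rewrite -(gcd_all_divzK (isT : prime 2)) G0 mulr0.
Qed.

Lemma dvdz2_gcd_all : (2%:Z %| G)%Z.
Proof. by apply/dvdz_gcd_allP => p _; apply: dvdz2_mulB1. Qed.

(* theta_p(b_p) = theta_p(b_p (b_p - 1)) = theta_p(b_p (b_p - 1) / G) + theta_p(G). *)
Lemma pexp_theta_dvd_gcd_allE p : prime p -> (p%:Z %| b p)%Z -> b p != 0 ->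
  ((p ^ theta p (b p))%N%:Z %| G)%Z = ~~ (p%:Z %| (a p %/ G))%Z.
Proof.
move=> p_pr p_b b0; set al := (a p %/ G)%Z.
have aE : a p = al * G by rewrite gcd_all_divzK.
have := mulrB1_neq0 p_pr p_b b0; rewrite aE mulf_eq0 negb_or => /andP[al0 G0].
have := theta_mulB1 p_pr p_b; rewrite aE thetaM // => <-.
by rewrite dvdz_pexp_theta // -theta_gt0 // -{2}[theta p G]add0n leq_add2r leqn0 lt0n negbK.
Qed.

Lemma condB_gcd_allE p : prime p -> (forall q, prime q -> (q%:Z %| b q)%Z) -> b p != 0 ->
  condB b p <-> ((p ^ theta p (b p))%N%:Z %| G)%Z.
Proof.
move=> p_pr b_dvd b0; rewrite dvdz_gcd_allP; split.
  move=> [_ [theta_min _]] q q_pr; have [-> | bq0] := eqVneq (b q) 0.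
    by rewrite mul0r dvdz0.
  by rewrite dvdz_pexp_theta ?theta_min // (mulrB1_neq0 q_pr) ?b_dvd.
move=> pexp_dvd; split=> //; split=> [q q_pr bq0 | ].
  by rewrite -dvdz_pexp_theta ?pexp_dvd // (mulrB1_neq0 q_pr) ?b_dvd.
by exists p; rewrite theta_mulB1 ?b_dvd.
Qed.

Lemma condB_dvd_gcd_all p : prime p -> (forall q, prime q -> (q%:Z %| b q)%Z) ->
  condB b p -> (p%:Z %| G)%Z.
Proof.
move=> p_pr b_dvd pB; have [bp0 _] := pB.
move/(condB_gcd_allE p_pr b_dvd bp0): pB; apply: dvdz_trans.
by rewrite dvdzE !absz_nat dvdn_exp // theta_gt0 ?b_dvd.
Qed.

Lemma condB_ndvd_divz p : prime p -> (forall q, prime q -> (q%:Z %| b q)%Z) ->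
  condB b p -> ~~ (p%:Z %| (a p %/ G))%Z.
Proof.
move=> p_pr b_dvd pB; have [bp0 _] := pB.
by rewrite -pexp_theta_dvd_gcd_allE ?b_dvd // -condB_gcd_allE.
Qed.

Lemma condA_ndvd2_divz : condA b -> ~~ (2%:Z %| (a 2%N %/ G))%Z.
Proof.
move=> [b2 b_dvd b_odd]; rewrite -pexp_theta_dvd_gcd_allE ?b_dvd //.
apply/dvdz_gcd_allP => p p_pr; case: (even_prime p_pr) => [-> | p_odd]; last exact: b_odd.
by rewrite dvdz_mulr // dvdz_pexp_theta.
Qed.

Lemma proportional_to_gcd_all (c : nat -> int) : a 2%N != 0 ->
    (forall p, prime p -> c p * a 2%N = c 2%N * a p) ->
  exists t, forall p, prime p -> c p = t * (a p %/ G)%Z.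
Proof.
move=> a2_neq0 c_prop.
set al2 := (a 2%N %/ G)%Z; have a2E : a 2%N = al2 * G by rewrite gcd_all_divzK.
pose g := gcdz (a 2%N) (c 2%N); pose D := (a 2%N %/ g)%Z.
have aDg : D * g = a 2%N by rewrite divzK ?dvdz_gcdl.
have D0 : D != 0 by apply: contraNneq a2_neq0 => D0; rewrite -aDg D0 mul0r.
have DG : (D %| G)%Z.
  apply/dvdz_gcd_allP => p p_pr; apply: dvdz_div_gcd => //.
  by rewrite -(c_prop p p_pr) dvdz_mull.
have al2g : (al2 %| g)%Z.
  apply/dvdzP; exists (G %/ D)%Z; apply: (mulIf D0).
  by rewrite mulrC aDg a2E -{1}(divzK DG); ring.
have al2c : (al2 %| c 2%N)%Z := dvdz_trans al2g (dvdz_gcdr _ _).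
exists (c 2%N %/ al2)%Z => p p_pr; apply: (mulIf a2_neq0).
by rewrite c_prop // -{1}(divzK al2c) -{1}(gcd_all_divzK p_pr) a2E; ring.
Qed.

End GcdFamily.

Lemma sym_residue_unique (u v k k' G : int) : u = 1 \/ u = -1 -> k = u * k' + v * G ->
  1 <= k -> 2 * k <= G -> 1 <= k' -> 2 * k' <= G -> k = k'.
Proof.
move=> u_sign kE k1 kG k'1 k'G.
have [v0 | [v_pos | v_neg]] : v = 0 \/ 1 <= v \/ v <= -1 by lia.
- by subst v; case: u_sign kE => ->; lia.
- by case: u_sign kE => ->; nia.
- by case: u_sign kE => ->; nia.
Qed.

Lemma odd_sym_residue (t G : int) : 0 < G -> (2%:Z %| G)%Z -> ~~ (2%:Z %| t)%Z ->
  exists u v k : int,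
    [/\ u = 1 \/ u = -1, t = u * k + v * G, ~~ (2%:Z %| k)%Z, 1 <= k & 2 * k <= G].
Proof.
move=> G_gt0 G_even t_odd.
have r_ge0 : 0 <= (t %% G)%Z by rewrite modz_ge0 // gt_eqF.
have r_lt : (t %% G)%Z < G := ltz_pmod t G_gt0.
have qG_even : (2%:Z %| (t %/ G)%Z * G)%Z by apply: dvdz_mull.
have tE := divz_eq t G.
move: (t %/ G)%Z (t %% G)%Z qG_even tE r_ge0 r_lt => q r qG_even tE r_ge0 r_lt.
have r_odd : ~~ (2%:Z %| r)%Z by move: t_odd qG_even; rewrite tE; move: (q * G) => qG; lia.
have [r_small | r_large] := leP (2 * r) G.
  by exists 1, q, r; split; [left | rewrite tE; ring | | lia | ].
exists (-1), (q + 1), (G - r); split; [by right | rewrite tE; ring | | lia | lia].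
by move: r_odd G_even; lia.
Qed.

Definition quadratic (b c : int) : {poly int} := b%:P * 'X + c%:P * 'X^2.

Lemma quadratic_coef b c : let f := quadratic b c in
  [/\ (size f <= 3)%N, f`_0 = 0, f`_1 = b & f`_2 = c].
Proof.
have coefE i : (quadratic b c)`_i = b * (i == 1)%:R + c * (i == 2)%:R.
  by rewrite coefD !coefCM coefX coefXn.
split; rewrite ?coefE ?mulr0 ?mulr1 ?addr0 ?add0r //.
by apply/leq_sizeP => -[|[|[|i]]] // _; rewrite coefE !mulr0 addr0.
Qed.

Lemma S_cE c p : S_c c p = quadratic 0 (c p).
Proof. by rewrite /quadratic mul0r add0r. Qed.

Lemma S_c_shaped c : adams_shaped (S_c c).
Proof. by move=> p _; rewrite S_cE; have [] := quadratic_coef 0 (c p). Qed.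

Lemma S_bk_shaped b k G : adams_shaped (S_bk b k G).
Proof. by move=> p _; have [] := quadratic_coef (b p) ((k * (b p * (b p - 1))) %/ G)%Z. Qed.

Lemma coef1_S_c c p : (S_c c p)`_1 = 0.
Proof. by rewrite S_cE; have [] := quadratic_coef 0 (c p). Qed.

Lemma coef2_S_c c p : (S_c c p)`_2 = c p.
Proof. by rewrite S_cE; have [] := quadratic_coef 0 (c p). Qed.

Lemma coef1_S_bk b k G p : (S_bk b k G p)`_1 = b p.
Proof. by have [] := quadratic_coef (b p) ((k * (b p * (b p - 1))) %/ G)%Z. Qed.

Lemma coef2_S_bk b k G p : is_gcd_all b G -> prime p ->
  (S_bk b k G p)`_2 = k * (b p * (b p - 1) %/ G)%Z.
Proof.
move=> [_ G_dvd _] p_pr; rewrite mulz_divA ?G_dvd //.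
by have [] := quadratic_coef (b p) ((k * (b p * (b p - 1))) %/ G)%Z.
Qed.

Lemma S_c_filt_lambda c : condC c -> is_filt_lambda (S_c c).
Proof.
move=> [c2 c_odd]; apply/is_filt_lambdaP; split=> [||||p p_pr p_odd].
- exact: S_c_shaped.
- by move=> p q _ _; rewrite !coef1_S_c !mul0r !mulr0.
- by rewrite coef1_S_c.
- by rewrite coef2_S_c.
- by rewrite coef1_S_c coef2_S_c dvdz0 c_odd // odd_prime_gt2.
Qed.

Lemma S_c_isoP d c c' : (0 < d)%N ->
  flr_iso d (S_c c) (S_c c') <->
  (forall p, prime p -> c p = c' p) \/ (forall p, prime p -> c p = - c' p).
Proof.
move=> d_gt0; rewrite (flr_isoP d_gt0 (S_c_shaped c) (S_c_shaped c')); split.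
  move=> [u [v [u_sign cc']]].
  have {}cc' p : prime p -> c p = u * c' p.
    by move=> p_pr; have [_] := cc' p p_pr; rewrite !coef1_S_c !coef2_S_c mul0r mulr0 addr0.
  by case: u_sign cc' => -> cc'; [left | right] => p p_pr; rewrite cc' ?mulN1r ?mul1r.
case=> cc'; [exists 1, 0 | exists (-1), 0]; (split; first by auto) => p p_pr.
all: by rewrite !coef1_S_c !coef2_S_c cc' //; split=> //; ring.
Qed.

Lemma S_c_not_iso_S_bk d c b k G : (0 < d)%N -> condA b -> ~ flr_iso d (S_c c) (S_bk b k G).
Proof.
move=> d_gt0 [b2 _ _].
rewrite (flr_isoP d_gt0 (S_c_shaped c) (S_bk_shaped b k G)) => -[u [v [_ iso]]].
by have [] := iso 2%N isT; rewrite coef1_S_c coef1_S_bk => b20; rewrite -b20 eqxx in b2.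
Qed.

Section SbkFamily.
Variables (b : nat -> int) (G : int).
Hypotheses (bA : condA b) (bG : is_gcd_all b G).
Local Notation a p := (b p * (b p - 1)).
Local Notation al p := ((a p %/ G)%Z).

Lemma condA_gcd_all_gt0 : 0 < G.
Proof.
by case: bA => b2 b_dvd _; rewrite (gcd_all_gt0 bG) ?(mulrB1_neq0 (isT : prime 2)) ?b_dvd.
Qed.

Lemma condA_divz_neq0 : al 2%N != 0.
Proof. by apply: contraNneq (condA_ndvd2_divz bG bA) => ->; apply: dvdz0. Qed.

Lemma S_bk_filt_lambda k : condK b G k -> is_filt_lambda (S_bk b k G).
Proof.
case: bA => b2 b_dvd _ [k_odd _ _ k_condB].
apply/is_filt_lambdaP; split=> [||||p p_pr p_odd].
- exact: S_bk_shaped.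
- move=> p q p_pr q_pr; rewrite !coef1_S_bk !coef2_S_bk //.
  by rewrite -{1}(gcd_all_divzK bG q_pr) -{2}(gcd_all_divzK bG p_pr); ring.
- by rewrite coef1_S_bk b_dvd.
- by rewrite coef2_S_bk // (Euclid_dvdzM (isT : prime 2)) negb_or k_odd condA_ndvd2_divz.
rewrite coef1_S_bk coef2_S_bk // b_dvd //; split=> //.
rewrite (Euclid_dvdzM p_pr) orbC.
have [// | al_ndvd] /= := boolP (p%:Z %| al p)%Z.
have [bp0 | bp0] := eqVneq (b p) 0; first by rewrite bp0 mul0r div0z dvdz0 in al_ndvd.
apply: k_condB => //; apply/(condB_gcd_allE bG p_pr b_dvd bp0).
by rewrite (pexp_theta_dvd_gcd_allE bG p_pr (b_dvd p p_pr) bp0).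
Qed.

End SbkFamily.

Lemma S_bk_isoP d b b' k G k' G' : (0 < d)%N ->
  condA b -> is_gcd_all b G -> condK b G k ->
  condA b' -> is_gcd_all b' G' -> condK b' G' k' ->
  flr_iso d (S_bk b k G) (S_bk b' k' G') <-> (forall p, prime p -> b p = b' p) /\ k = k'.
Proof.
move=> d_gt0 bA bG [_ k1 kG _] _ b'G [_ k'1 k'G _].
rewrite (flr_isoP d_gt0 (S_bk_shaped b k G) (S_bk_shaped b' k' G')); split.
  move=> [u [v [u_sign iso]]].
  have bb' p : prime p -> b p = b' p.
    by move=> p_pr; have [] := iso p p_pr; rewrite !coef1_S_bk.
  split=> //; have GG' := gcd_all_unique bG b'G bb'; subst G'.
  have [_] := iso 2%N isT; rewrite !coef1_S_bk !coef2_S_bk // -bb' //.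
  set al2 := ((b 2%N * (b 2%N - 1)) %/ G)%Z.
  rewrite -[X in v * X](gcd_all_divzK bG (isT : prime 2%N)) -/al2 => kE.
  apply: (sym_residue_unique (v := v) u_sign _ k1 kG k'1 k'G).
  by apply: (mulIf (condA_divz_neq0 bA bG)); rewrite -/al2 kE; ring.
move=> [bb' <-]; have GG' := gcd_all_unique bG b'G bb'; subst G'.
exists 1, 0; split=> [|p p_pr]; first by left.
by rewrite !coef1_S_bk !coef2_S_bk // bb' //; split=> //; ring.
Qed.

Section Classification.
Variables (d : nat) (psi : nat -> {poly int}).
Hypotheses (d_gt0 : (0 < d)%N) (psiL : is_filt_lambda psi).

Lemma filt_lambda_bcoef_dvd p : prime p -> (p%:Z %| (psi p)`_1)%Z.
Proof.
have [_ _ b2 _ bc_odd] := (is_filt_lambdaP psi).1 psiL.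
by move=> p_pr; case: (even_prime p_pr) => [-> // | p_odd]; case: (bc_odd p p_pr p_odd).
Qed.

Lemma filt_lambda_b2_eq0 : (psi 2%N)`_1 = 0 -> exists c, condC c /\ flr_iso d psi (S_c c).
Proof.
move=> b2; have [shaped comm _ c2 bc_odd] := (is_filt_lambdaP psi).1 psiL.
have b0 p : prime p -> (psi p)`_1 = 0.
  move=> p_pr; apply/eqP; apply: contraNT c2 => bp0.
  have := comm 2%N p isT p_pr; rewrite b2 mul0r mulr0 => /eqP.
  rewrite mulf_eq0 (negbTE (mulrB1_neq0 p_pr (filt_lambda_bcoef_dvd p_pr) bp0)) orbF.
  by move=> /eqP ->; apply: dvdz0.
exists (fun p => (psi p)`_2); split.
  split=> // p p_pr p_gt2.
  case: (even_prime p_pr) => [p2 | p_odd]; first by rewrite p2 in p_gt2.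
  by case: (bc_odd p p_pr p_odd).
apply/(flr_isoP d_gt0 shaped (S_c_shaped _)); exists 1, 0; split=> [|p p_pr]; first by left.
by rewrite coef1_S_c coef2_S_c b0 //; split=> //; ring.
Qed.

Lemma filt_lambda_condA : (psi 2%N)`_1 != 0 -> condA (fun p => (psi p)`_1).
Proof.
move=> b2; have [_ comm _ c2 _] := (is_filt_lambdaP psi).1 psiL.
split=> // [p p_pr | p p_pr p_odd]; first exact: filt_lambda_bcoef_dvd.
rewrite -(Gauss_dvdzr _ (coprimez_pexp _ _ c2)) // (comm 2%N p isT p_pr).
by rewrite dvdz_mull // dvdz_mulr // dvdz_pexp_theta.
Qed.

Lemma filt_lambda_b2_neq0 : (psi 2%N)`_1 != 0 ->
  exists b k G, [/\ condA b, is_gcd_all b G, condK b G k & flr_iso d psi (S_bk b k G)].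
Proof.
move=> b2; have [shaped comm _ c2 bc_odd] := (is_filt_lambdaP psi).1 psiL.
have bA := filt_lambda_condA b2; have b_dvd := filt_lambda_bcoef_dvd.
have a2 := mulrB1_neq0 (isT : prime 2) (b_dvd 2%N isT) b2.
have [G bG] := gcd_all_exists (b := fun p => (psi p)`_1) a2.
have [t cE] := proportional_to_gcd_all bG (c := fun p => (psi p)`_2) a2
  (fun p p_pr => comm p 2%N p_pr isT).
have t_odd : ~~ (2%:Z %| t)%Z.
  by apply: contra c2 => t2; rewrite cE ?dvdz_mulr.
have [u [v [k [u_sign tE k_odd k1 kG]]]] :=
  odd_sym_residue (condA_gcd_all_gt0 bA bG) (dvdz2_gcd_all bG) t_odd.
exists (fun p => (psi p)`_1), k, G; split=> //.
  split=> // p p_pr p_odd pB.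
  have pt : (p%:Z %| t)%Z.
    have := (bc_odd p p_pr p_odd).2; rewrite cE // Euclid_dvdzM //.
    by rewrite (negbTE (condB_ndvd_divz bG p_pr b_dvd pB)) orbF.
  have -> : k = u * (t - v * G) by case: u_sign tE => -> ->; ring.
  by rewrite dvdz_mull // rpredB // dvdz_mull // (condB_dvd_gcd_all bG p_pr b_dvd pB).
apply/(flr_isoP d_gt0 shaped (S_bk_shaped _ _ _)); exists u, v; split=> // p p_pr.
rewrite coef1_S_bk coef2_S_bk // cE // tE; split=> //.
set al := (_ %/ G)%Z; rewrite -(gcd_all_divzK bG p_pr) -/al; ring.
Qed.

End Classification.

Theorem theorem1p3 (d : nat) (hd : (1 <= d)%N) :
  (forall psi : nat -> {poly int}, is_filt_lambda psi ->
     (exists c : nat -> int, condC c /\ flr_iso d psi (S_c c)) \/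
     (exists (b : nat -> int) (k G : int),
        [/\ condA b, is_gcd_all b G, condK b G k & flr_iso d psi (S_bk b k G)]))
  /\ (forall c : nat -> int, condC c -> is_filt_lambda (S_c c))
  /\ (forall c c' : nat -> int, condC c -> condC c' ->
        (flr_iso d (S_c c) (S_c c') <->
         ((forall p, prime p -> c p = c' p) \/ (forall p, prime p -> c p = - c' p))))
  /\ (forall (b : nat -> int) (k G : int), condA b -> is_gcd_all b G -> condK b G k ->
        is_filt_lambda (S_bk b k G))
  /\ (forall (b b' : nat -> int) (k G k' G' : int),
        condA b -> is_gcd_all b G -> condK b G k ->
        condA b' -> is_gcd_all b' G' -> condK b' G' k' ->
        (flr_iso d (S_bk b k G) (S_bk b' k' G') <->
         ((forall p, prime p -> b p = b' p) /\ k = k')))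
  /\ (forall (c b : nat -> int) (k G : int), condC c ->
        condA b -> is_gcd_all b G -> condK b G k ->
        ~ flr_iso d (S_c c) (S_bk b k G)).
Proof.
split.
  move=> psi psiL; have [b2 | b2] := eqVneq (psi 2%N)`_1 0.
    by left; apply: filt_lambda_b2_eq0.
  by right; apply: filt_lambda_b2_neq0.
split; first exact: S_c_filt_lambda.
split; first by move=> c c' _ _; apply: S_c_isoP.
split; first by move=> b k G bA bG; apply: S_bk_filt_lambda.
split; first by move=> b b' k G k' G'; apply: S_bk_isoP.
by move=> c b k G _ bA _ _; apply: S_c_not_iso_S_bk.
Qed.
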